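(* Let $\mathcal{H}=\bigoplus_{n\ge0}\mathcal{H}_n$ be a Hilbert space with a fixed orthogonal decomposition, and let $T\in B(\mathcal{H})$ be band-limited with band limit $b\ge0$. Then $T$ can be decomposed as $T=\sum_{k=0}^b X_k+\sum_{k=1}^b Y_k$, where each $X_k$ ($0\le k\le b$) is a $k$-raising operator and each $Y_k$ ($1\le k\le b$) is a $k$-lowering operator. This decomposition is unique. Moreover, if $T$ is summable, then each $X_k$ and each $Y_k$ is summable.
   Context: $T\in B(\mathcal{H})$ is band-limited with band limit $b$ if $T(\mathcal{H}_n)\subseteq\bigoplus_{m\ge0,|m-n|\le b}\mathcal{H}_m$ for all $n\ge0$. A band-limited $T$ is summable if $\sum_{n\ge0}\|T|_{\mathcal{H}_n}\|<\infty$ ($T|_{\mathcal{H}_n}$ the restriction to $\mathcal{H}_n$). A band-limited $T$ is $k$-raising ($k\ge0$) if $T(\mathcal{H}_n)\subseteq\mathcal{H}_{n+k}$ for all $n\ge0$, and $k$-lowering if $T(\mathcal{H}_n)\subseteq\mathcal{H}_{n-k}$ for $n\ge k$ and $T(\mathcal{H}_n)=\{0\}$ for $n<k$. *)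

From HB Require Import structures.
From mathcomp Require Import all_boot all_order all_algebra.
From mathcomp Require Import all_classical all_reals all_analysis.
From mathcomp Require Import complex.
Import Order.TTheory GRing.Theory Num.Theory.
Import numFieldNormedType.Exports.

Set Implicit Arguments.
Unset Strict Implicit.
Unset Printing Implicit Defensive.

Local Open Scope classical_set_scope.
Local Open Scope ring_scope.

Section HilbertDefs.
Variable R : realType.
Variable V : completeNormedModType R[i].

(* An inner product inducing the norm of V: together with completeness of V
   this makes V a (complex) Hilbert space. *)
Record inner_product := InnerProduct {
  ip :> V -> V -> R[i];
  ip_linearl : forall (a : R[i]) (x y z : V), ip (a *: x + y) z = a * ip x z + ip y z;
  ip_conj : forall x y : V, ip y x = (ip x y)^*;
  ip_norm : forall x : V, ip x x = `|x| ^+ 2 }.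

Definition subspace (A : set V) :=
  A 0 /\ (forall (a : R[i]) (x y : V), A x -> A y -> A (a *: x + y)).

(* the (algebraic = orthogonal, since finite) sum  H_lo + ... + H_(hi-1) *)
Definition finsum_sub (H : nat -> set V) (lo hi : nat) : set V :=
  [set v | exists x : nat -> V,
     (forall m, (lo <= m < hi)%N -> H m (x m)) /\ v = \sum_(lo <= m < hi) x m].

(* H = \bigoplus_(n >= 0) H_n : closed, pairwise orthogonal subspaces whose
   algebraic span is dense in V *)
Definition orth_decomp (ip : inner_product) (H : nat -> set V) :=
  [/\ forall n, subspace (H n),
      forall n, closed (H n),
      forall n m x y, n <> m -> H n x -> H m y -> ip x y = 0 &
      closure [set v | exists N, finsum_sub H 0 N v] = setT].

Definition bounded_op (T : {linear V -> V}) := continuous (T : V -> V).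

(* T(H_n) is contained in \bigoplus_{m >= 0, |m - n| <= b} H_m *)
Definition band_limited (H : nat -> set V) (b : nat) (T : {linear V -> V}) :=
  forall n x, H n x -> finsum_sub H (n - b) (n + b).+1 (T x).

Definition raising (H : nat -> set V) (k : nat) (T : {linear V -> V}) :=
  forall n x, H n x -> H (n + k)%N (T x).

Definition lowering (H : nat -> set V) (k : nat) (T : {linear V -> V}) :=
  forall n x, H n x ->
    ((k <= n)%N -> H (n - k)%N (T x)) /\ ((n < k)%N -> T x = 0).

Definition restr_norm (T : {linear V -> V}) (A : set V) : \bar R :=
  ereal_sup [set ((complex.Re `|T x|)%:E)%E | x in [set x | A x /\ `|x| <= 1]].

Definition summable_op (H : nat -> set V) (T : {linear V -> V}) :=
  (\sum_(0 <= n <oo) restr_norm T (H n) < +oo)%E.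

Definition band_decomposition (H : nat -> set V) (b : nat) (T : {linear V -> V})
    (X Y : nat -> {linear V -> V}) :=
  [/\ forall k, (k <= b)%N -> bounded_op (X k) /\ raising H k (X k),
      forall k, (1 <= k <= b)%N -> bounded_op (Y k) /\ lowering H k (Y k) &
      forall v, T v = \sum_(0 <= k < b.+1) X k v + \sum_(1 <= k < b.+1) Y k v].

End HilbertDefs.

From Pilot Require Import Defs.
From HB Require Import structures.
From mathcomp Require Import all_boot all_order all_algebra.
From mathcomp Require Import all_classical all_reals all_analysis.
From mathcomp Require Import complex.
From mathcomp Require Import lra zify.
Import Order.TTheory GRing.Theory Num.Theory.
Import numFieldNormedType.Exports.

(* On the dense subspace of finite sums [d = \sum_m d_m] ([d_m] in [H m]) put
   [X_k d = \sum_m P_(m+k) (T d_m)] and [Y_k d = \sum_m P_(m-k) (T d_m)], where [P_j u] is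
   the [H j]-component of [u]; band-limitation makes [T d_m] a finite sum of such components
   with [|j - m| <= b], so [T = \sum_k X_k + \sum_k Y_k] on that subspace.  The levels
   [m + k] are pairwise distinct, so Pythagoras gives [|X_k d| <= |T| |d|]; hence [X_k] and
   [Y_k] extend by continuity to bounded operators and the identity holds everywhere.
   For [x] in [H n] the vectors [X_k x], [Y_k x] lie in pairwise orthogonal levels, so
   [ip (T x) (X_k x) = |X_k x|^2]: this pins down every piece on each [H n], whence
   uniqueness by density, and gives [|X_k x| <= |T x|], whence summability. *)

Set Implicit Arguments.
Unset Strict Implicit.
Unset Printing Implicit Defensive.

Local Open Scope classical_set_scope.
Local Open Scope complex_scope.
Local Open Scope ring_scope.

Section RealNorm.
Context {R : realType}.

Lemma complex_realE (z : R[i]) : 0 <= z -> z = (complex.Re z)%:C.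
Proof. by case: z => a b; rewrite lecE /= => /andP[/eqP -> _]. Qed.

Lemma Re_normr_ge0 (a : R[i]) : 0 <= complex.Re `|a|.
Proof. by have := normr_ge0 a; rewrite lecE => /andP[_]. Qed.

Lemma ler_add_scaled_gt0 (a c K : R) :
  0 <= K -> (forall e, 0 < e -> a <= c + K * e) -> a <= c.
Proof.
move=> K0 h; rewrite leNgt; apply/negP => lt_ca.
have e0 : 0 < (a - c) / (2 * (K + 1)) by apply: divr_gt0; [rewrite subr_gt0 | lra].
have := h _ e0; set e := (a - c) / (2 * (K + 1)).
have : (2 * (K + 1)) * e = a - c by rewrite /e mulrC divfK //; lra.
nra.
Qed.

Lemma inv_succ_lt (e : R) : 0 < e ->
  exists N, forall j, (N <= j)%N -> (j.+1%:R : R)^-1 < e.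
Proof.
move=> e0; exists (Num.bound e^-1) => j hj.
have h1 : e^-1 < (Num.bound e^-1)%:R by apply: archi_boundP; rewrite invr_ge0 ltW.
have h2 : (Num.bound e^-1)%:R <= (j.+1%:R : R) by rewrite ler_nat; lia.
rewrite -[e]invrK ltf_pV2 ?posrE ?invr_gt0 ?ltr0n //.
exact: lt_le_trans h1 h2.
Qed.

Context {V : normedModType R[i]}.

Definition rnorm (x : V) : R := complex.Re `|x|.

Lemma normr_rnorm (x : V) : `|x| = (rnorm x)%:C.
Proof. exact/complex_realE. Qed.

Lemma rnorm_ge0 (x : V) : 0 <= rnorm x.
Proof. by have := normr_ge0 x; rewrite normr_rnorm lecR. Qed.

Lemma rnorm0 : rnorm (0 : V) = 0.
Proof. by rewrite /rnorm normr0. Qed.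

Lemma rnorm_eq0 (x : V) : rnorm x = 0 -> x = 0.
Proof. by move=> h; apply/normr0_eq0; rewrite normr_rnorm h. Qed.

Lemma rnormD (x y : V) : rnorm (x + y) <= rnorm x + rnorm y.
Proof. by have := ler_normD x y; rewrite !normr_rnorm lecE /= => /andP[_]. Qed.

Lemma rnormZ (a : R[i]) (x : V) : rnorm (a *: x) = complex.Re `|a| * rnorm x.
Proof.
by rewrite /rnorm normrZ (complex_realE (normr_ge0 a)) normr_rnorm /= mulr0 subr0.
Qed.

Lemma rnormB (x y : V) : rnorm (x - y) = rnorm (y - x).
Proof. by rewrite /rnorm distrC. Qed.

Lemma rnorm_triangle (x y z : V) : rnorm (x - z) <= rnorm (x - y) + rnorm (y - z).
Proof. by have := rnormD (x - y) (y - z); rewrite addrA subrK. Qed.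

End RealNorm.

Section BoundedOp.
Context {R : realType} {V : completeNormedModType R[i]}.

Lemma bounded_opP (L : {linear V -> V}) : bounded_op L ->
  exists2 C : R, 0 < C & forall x, rnorm (L x) <= C * rnorm x.
Proof.
move=> cL; have := @continuous_linear_bounded _ V V 0 L (cL 0).
move=> /linear_boundedP /pinfty_ex_gt0 [r r0 hr].
have re := complex_realE (ltW r0).
exists (complex.Re r); first by move: r0; rewrite re ltcR.
by move=> x; have := hr x; rewrite !normr_rnorm re -rmorphM lecR.
Qed.

Lemma bounded_opW (L : {linear V -> V}) (C : R) :
  (forall x, rnorm (L x) <= C * rnorm x) -> bounded_op L.
Proof.
move=> hL; apply/linear_bounded_continuous/linear_boundedP.
exists (`|C|)%:C; split; first by rewrite realE lecR normr_ge0.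
move=> r hr x; have r0 : 0 <= r by apply: le_trans (ltW hr); rewrite lecR.
move: hr; rewrite (complex_realE r0) ltcR => hr.
rewrite !normr_rnorm -rmorphM lecR; apply: le_trans (hL x) _.
by apply: ler_wpM2r; [exact: rnorm_ge0 | exact: le_trans (ler_norm C) (ltW hr)].
Qed.

End BoundedOp.

Section InnerProduct.
Context {R : realType} {V : completeNormedModType R[i]} (ip : inner_product V).

Lemma ipDl (x y z : V) : ip (x + y) z = ip x z + ip y z.
Proof. by have := ip_linearl ip 1 x y z; rewrite scale1r mul1r. Qed.

Lemma ip0l (z : V) : ip 0 z = 0.
Proof. by apply: (addrI (ip 0 z)); rewrite -ipDl !addr0. Qed.

Lemma ipNl (x z : V) : ip (- x) z = - ip x z.
Proof. by apply: (addrI (ip x z)); rewrite -ipDl !subrr ip0l. Qed.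

Lemma ipBl (x y z : V) : ip (x - y) z = ip x z - ip y z.
Proof. by rewrite ipDl ipNl. Qed.

Lemma ip0r (z : V) : ip z 0 = 0.
Proof. by rewrite ip_conj ip0l conjC0. Qed.

Lemma ipDr (x y z : V) : ip z (x + y) = ip z x + ip z y.
Proof.
rewrite (ip_conj _ (x + y)) ipDl rmorphD.
by congr (_ + _); rewrite [RHS]ip_conj.
Qed.

Lemma ip_suml (I : Type) (r : seq I) (P : pred I) (F : I -> V) z :
  ip (\sum_(i <- r | P i) F i) z = \sum_(i <- r | P i) ip (F i) z.
Proof. by elim/big_rec2: _ => [|i y1 y2 _ <-]; [exact: ip0l | exact: ipDl]. Qed.

Lemma ip_self (x : V) : ip x x = (rnorm x ^+ 2)%:C.
Proof. by rewrite ip_norm normr_rnorm -rmorphXn. Qed.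

Lemma ip_self_eq0 (x : V) : ip x x = 0 -> x = 0.
Proof. by rewrite ip_self => -[] /eqP; rewrite expf_eq0 /= => /eqP /rnorm_eq0. Qed.

Lemma pythagoras (x y : V) : ip x y = 0 ->
  rnorm (x + y) ^+ 2 = rnorm x ^+ 2 + rnorm y ^+ 2.
Proof.
move=> xy0; have yx0 : ip y x = 0 by rewrite ip_conj xy0 conjC0.
have : ip (x + y) (x + y) = ip x x + ip y y.
  by rewrite ipDl !ipDr xy0 yx0 addr0 add0r.
by rewrite !ip_self -rmorphD => -[].
Qed.

Lemma pythagoras_sum (z : nat -> V) N :
  (forall i j, (i < N)%N -> (j < N)%N -> i <> j -> ip (z i) (z j) = 0) ->
  rnorm (\sum_(0 <= i < N) z i) ^+ 2 = \sum_(0 <= i < N) rnorm (z i) ^+ 2.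
Proof.
elim: N => [|N IH] orth; first by rewrite !big_geq // rnorm0 expr0n.
rewrite !big_nat_recr //= pythagoras ?IH //.
  by move=> i j ? ? ?; apply: orth => //; lia.
rewrite ip_suml big_nat_cond big1 // => i /andP[/andP[_ ltiN] _].
by apply: orth; lia.
Qed.

Lemma ip_sum_seq_single (I : eqType) (r : seq I) j (F : I -> V) y :
  uniq r -> j \in r -> (forall k, k \in r -> k != j -> ip (F k) y = 0) ->
  ip (\sum_(k <- r) F k) y = ip (F j) y.
Proof.
move=> r_uniq jr Fr; rewrite ip_suml (bigD1_seq j) //= big_seq_cond big1 ?addr0 //.
by move=> k /andP[kr kj]; apply: Fr.
Qed.

Lemma ip_sum_seq_eq0 (I : eqType) (r : seq I) (F : I -> V) y :
  (forall k, k \in r -> ip (F k) y = 0) -> ip (\sum_(k <- r) F k) y = 0.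
Proof. by move=> Fr; rewrite ip_suml big_seq big1. Qed.

(* The orthogonality [ip u (S - u) = 0] exhibits [u] as an orthogonal summand of [S]. *)
Lemma rnorm_le_of_ip (S u : V) : ip S u = ip u u -> rnorm u <= rnorm S.
Proof.
move=> Su; have : ip u (S - u) = 0 by rewrite ip_conj ipBl Su subrr conjC0.
move=> /pythagoras; rewrite addrC subrK => eS.
have := rnorm_ge0 u; have := rnorm_ge0 S; have := rnorm_ge0 (S - u); nra.
Qed.

End InnerProduct.

Section Sequences.
Context {R : realType} {V : normedModType R[i]}.

Definition converges_to (u : nat -> V) (l : V) := forall e : R, 0 < e ->
  exists N, forall j, (N <= j)%N -> rnorm (l - u j) < e.

Lemma converges_to_unique u l l' : converges_to u l -> converges_to u l' -> l = l'.
Proof.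
move=> ul ul'; apply/eqP; rewrite -subr_eq0; apply/eqP/rnorm_eq0/le_anti.
rewrite rnorm_ge0 andbT.
apply: (@ler_add_scaled_gt0 _ _ 0 2) => // e e0.
have [N hN] := ul e e0; have [N' hN'] := ul' e e0.
have := hN (maxn N N') (leq_maxl _ _); have := hN' (maxn N N') (leq_maxr _ _).
by rewrite rnormB; have := rnorm_triangle l (u (maxn N N')) l'; lra.
Qed.

Lemma eq_converges_to u w l : u =1 w -> converges_to u l -> converges_to w l.
Proof. by move=> uw ul e /ul [N hN]; exists N => j /hN; rewrite uw. Qed.

Lemma converges_to_cst l : converges_to (fun=> l) l.
Proof. by move=> e e0; exists 0%N => j _; rewrite subrr rnorm0. Qed.

Lemma converges_toZD a u l w m : converges_to u l -> converges_to w m ->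
  converges_to (fun j => a *: u j + w j) (a *: l + m).
Proof.
move=> ul wm e e0; have a0 := Re_normr_ge0 a.
have e1 : 0 < e / (2 * (complex.Re `|a| + 1)) by apply: divr_gt0 => //; lra.
have [N1 h1] := ul _ e1; have [N2 h2] := wm _ (divr_gt0 e0 (ltr0n _ 2)).
exists (maxn N1 N2) => j; rewrite geq_max => /andP[/h1 q1 /h2 q2].
have -> : a *: l + m - (a *: u j + w j) = a *: (l - u j) + (m - w j).
  by rewrite scalerBr opprD addrACA.
apply: le_lt_trans (rnormD _ _) _; rewrite rnormZ.
have : (2 * (complex.Re `|a| + 1)) * (e / (2 * (complex.Re `|a| + 1))) = e.
  by rewrite mulrC divfK //; lra.
have : 2 * (e / 2) = e by rewrite mulrC divfK.
have := rnorm_ge0 (l - u j); nra.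
Qed.

Lemma converges_toD u l w m : converges_to u l -> converges_to w m ->
  converges_to (fun j => u j + w j) (l + m).
Proof.
move=> /(converges_toZD 1) h /h; rewrite scale1r.
by apply: eq_converges_to => j; rewrite scale1r.
Qed.

Lemma converges_to_sum (I : Type) (r : seq I) (u : I -> nat -> V) (l : I -> V) :
  (forall i, converges_to (u i) (l i)) ->
  converges_to (fun j => \sum_(i <- r) u i j) (\sum_(i <- r) l i).
Proof.
move=> ul; elim: r => [|i r IH].
  rewrite big_nil; apply: eq_converges_to (converges_to_cst 0) => j.
  by rewrite big_nil.
rewrite big_cons; apply: eq_converges_to (converges_toD (ul i) IH) => j.
by rewrite big_cons.
Qed.

Lemma converges_to_bounded (L : {linear V -> V}) (K : R) u v : 0 <= K ->
  (forall x, rnorm (L x) <= K * rnorm x) ->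
  converges_to u v -> converges_to (fun j => L (u j)) (L v).
Proof.
move=> K0 hL uv e e0.
have K1 : 0 < K + 1 by lra.
have [N hN] := uv _ (divr_gt0 e0 K1).
exists N => j /hN lt_vu; rewrite -linearB; apply: le_lt_trans (hL _) _.
have : (K + 1) * (e / (K + 1)) = e by rewrite mulrC divfK //; lra.
have := rnorm_ge0 (v - u j); nra.
Qed.

End Sequences.

Lemma cauchy_converges {R : realType} {V : completeNormedModType R[i]} (u : nat -> V) :
  (forall e : R, 0 < e -> exists N, forall i j, (N <= i)%N -> (N <= j)%N ->
     rnorm (u i - u j) < e) ->
  exists l, converges_to u l.
Proof.
move=> uC.
have : cauchy_ex (u @ \oo).
  move=> e e0; have re := complex_realE (ltW e0).
  have [N hN] : exists N, forall i j, (N <= i)%N -> (N <= j)%N ->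
      rnorm (u i - u j) < complex.Re e by apply: uC; rewrite -ltcR -re.
  exists (u N), N => // n /= ltNn.
  by rewrite -ball_normE /= normr_rnorm re ltcR; apply: hN.
move=> /cauchy_exP /cauchy_cvg /cvgrPdist_lt ucvg.
exists (lim (u @ \oo)) => e e0.
have [N _ hN] := ucvg e%:C ltac:(by rewrite ltcR).
by exists N => j /hN; rewrite normr_rnorm ltcR.
Qed.

Section Subspace.
Context {R : realType} {V : completeNormedModType R[i]} (A : set V)
  (Asub : Defs.subspace A).

Lemma subspace0 : A 0.
Proof. by case: Asub. Qed.

Lemma subspaceZD a x y : A x -> A y -> A (a *: x + y).
Proof. by case: Asub => _; apply. Qed.

Lemma subspaceB x y : A x -> A y -> A (x - y).
Proof. by move=> Ax Ay; have := subspaceZD (-1) Ay Ax; rewrite scaleN1r addrC. Qed.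

End Subspace.

Section DenseApprox.
Context {R : realType} {V : completeNormedModType R[i]} (D : set V)
  (Ddense : closure D = setT).

Lemma dense_approx v (e : R) : 0 < e -> exists d, D d /\ rnorm (v - d) < e.
Proof.
move=> e0; have : closure D v by rewrite Ddense.
move=> /(_ (ball v e%:C)) []; first by apply: nbhsx_ballx; rewrite ltcR.
by move=> d [Dd vd]; exists d; move: vd; rewrite -ball_normE /= normr_rnorm ltcR.
Qed.

Definition approx v (j : nat) : V :=
  sval (cid (dense_approx v (ltac:(by rewrite invr_gt0 ltr0n) : 0 < j.+1%:R^-1))).

Lemma approx_in v j : D (approx v j).
Proof. by rewrite /approx; case: cid => ? []. Qed.

Lemma converges_to_approx v : converges_to (approx v) v.
Proof.
move=> e /inv_succ_lt [N hN]; exists N => j /hN; apply: lt_trans.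
by rewrite /approx; case: cid => ? [].
Qed.

Lemma bounded_eq_on_dense (L1 L2 : {linear V -> V}) :
  bounded_op L1 -> bounded_op L2 -> (forall d, D d -> L1 d = L2 d) -> L1 =1 L2.
Proof.
move=> /bounded_opP [C1 /ltW C10 hC1] /bounded_opP [C2 /ltW C20 hC2] L12 v.
apply: (converges_to_unique (converges_to_bounded C10 hC1 (converges_to_approx v))).
apply: eq_converges_to (converges_to_bounded C20 hC2 (converges_to_approx v)) => j.
by rewrite L12 //; apply: approx_in.
Qed.

End DenseApprox.

Section Extension.
Context {R : realType} {V : completeNormedModType R[i]} (D : set V)
  (Dsub : Defs.subspace D) (Ddense : closure D = setT) (f : V -> V)
  (f_lin : forall a x y, D x -> D y -> f (a *: x + y) = a *: f x + f y)
  (C : R) (C0 : 0 <= C) (f_bound : forall x, D x -> rnorm (f x) <= C * rnorm x).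

Lemma lipschitz_on_dense x y : D x -> D y -> rnorm (f x - f y) <= C * rnorm (x - y).
Proof.
move=> Dx Dy; have := f_lin (-1) Dy Dx; rewrite !scaleN1r !(addrC (- _)) => <-.
by apply: f_bound; apply: subspaceB.
Qed.

Lemma cauchy_approx_image v (e : R) : 0 < e -> exists N, forall i j,
  (N <= i)%N -> (N <= j)%N -> rnorm (f (approx Ddense v i) - f (approx Ddense v j)) < e.
Proof.
move=> e0; have C1 : 0 < 2 * C + 1 by have := C0; lra.
have d0 := divr_gt0 e0 C1; have [N hN] := converges_to_approx Ddense v d0.
exists N => i j /hN vi /hN vj.
have : (2 * C + 1) * (e / (2 * C + 1)) = e by rewrite mulrC divfK //; lra.
set d := e / (2 * C + 1) in d0 vi vj * => ed.
apply: le_lt_trans (lipschitz_on_dense (approx_in _ _ _) (approx_in _ _ _)) _.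
have := rnorm_triangle (approx Ddense v i) v (approx Ddense v j).
rewrite [rnorm (approx _ _ _ - v)]rnormB => tri.
have : C * rnorm (approx Ddense v i - approx Ddense v j) <= C * (2 * d).
  by apply: ler_wpM2l => //; lra.
have := C0; lra.
Qed.

Definition extension_fun v : V := sval (cid (cauchy_converges (cauchy_approx_image v))).

Lemma converges_to_extension v :
  converges_to (fun j => f (approx Ddense v j)) (extension_fun v).
Proof. by rewrite /extension_fun; case: cid. Qed.

Lemma converges_to_extension_any v (d : nat -> V) : (forall j, D (d j)) ->
  converges_to d v -> converges_to (fun j => f (d j)) (extension_fun v).
Proof.
move=> Dd dv e e0.
have C4 : 0 < 4 * (C + 1) by have := C0; lra.
have : (4 * (C + 1)) * (e / (4 * (C + 1))) = e by rewrite mulrC divfK //; lra.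
have : 2 * (e / 2) = e by rewrite mulrC divfK.
have := divr_gt0 e0 C4; set del := e / (4 * (C + 1)) => del0 ee2 eedel.
have [N1 h1] := converges_to_extension v (divr_gt0 e0 (ltr0n _ 2)).
have [N2 h2] := converges_to_approx Ddense v del0.
have [N3 h3] := dv _ del0.
exists (maxn N1 (maxn N2 N3)) => j; rewrite !geq_max => /and3P[/h1 q1 /h2 q2 /h3 q3].
have := rnorm_triangle (extension_fun v) (f (approx Ddense v j)) (f (d j)).
have := lipschitz_on_dense (approx_in Ddense v j) (Dd j).
have := rnorm_triangle (approx Ddense v j) v (d j); rewrite [rnorm (_ - v)]rnormB.
have := rnorm_ge0 (v - approx Ddense v j); have := rnorm_ge0 (v - d j).
have := rnorm_ge0 (approx Ddense v j - d j); have := C0; nra.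
Qed.

Lemma extension_fun_lin a v w :
  extension_fun (a *: v + w) = a *: extension_fun v + extension_fun w.
Proof.
have Dd j : D (a *: approx Ddense v j + approx Ddense w j).
  by apply: subspaceZD => //; apply: approx_in.
apply: (converges_to_unique (converges_to_extension_any Dd
  (converges_toZD a (converges_to_approx Ddense v) (converges_to_approx Ddense w)))).
apply: eq_converges_to (converges_toZD a (converges_to_extension v)
  (converges_to_extension w)) => j.
by rewrite f_lin //; apply: approx_in.
Qed.

Definition extension : {linear V -> V} :=
  HB.pack extension_fun (GRing.isLinear.Build _ _ _ _ extension_fun extension_fun_lin).

Lemma extensionE d : D d -> extension d = f d.
Proof.
move=> Dd; change (extension_fun d = f d); apply: (converges_to_unique _ (converges_to_cst (f d))).
exact: converges_to_extension_any (converges_to_cst d).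
Qed.

Lemma extension_bound v : rnorm (extension v) <= C * rnorm v.
Proof.
change (rnorm (extension_fun v) <= C * rnorm v).
apply: (@ler_add_scaled_gt0 _ _ _ (1 + C)); first by have := C0; lra.
move=> e e0; have [N1 h1] := converges_to_extension v e0.
have [N2 h2] := converges_to_approx Ddense v e0.
have := h1 _ (leq_maxl N1 N2); have := h2 _ (leq_maxr N1 N2).
set j := maxn N1 N2; have := f_bound (approx_in Ddense v j).
have := rnorm_triangle (extension_fun v) (f (approx Ddense v j)) 0.
have := rnorm_triangle (approx Ddense v j) v 0; rewrite !subr0 rnormB.
have := rnorm_ge0 (approx Ddense v j); have := rnorm_ge0 v; have := C0; nra.
Qed.

Lemma extension_bounded : bounded_op extension.
Proof. exact: bounded_opW extension_bound. Qed.

End Extension.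

Lemma big_nat_support_eq (U : nmodType) (F : nat -> U) N M :
  (forall j, (N <= j)%N -> F j = 0) -> (forall j, (M <= j)%N -> F j = 0) ->
  \sum_(0 <= j < N) F j = \sum_(0 <= j < M) F j.
Proof.
wlog leNM : N M / (N <= M)%N.
  by move=> hw FN FM; case: (leqP N M) => [/hw|/ltnW/hw]; [apply | move=> h; apply/esym/h].
move=> FN _; rewrite [RHS](big_cat_nat (n := N)) //= [X in _ = _ + X]big1_seq ?addr0 //.
by move=> j /andP[_]; rewrite mem_index_iota => /andP[/FN].
Qed.

Lemma big_nat_window (U : nmodType) (y : nat -> U) n b :
  (forall m, (m + b < n)%N -> y m = 0) ->
  \sum_(0 <= m < (n + b).+1) y m =
  \sum_(0 <= k < b.+1) y (n + k)%N +
  \sum_(1 <= k < b.+1) (if (k <= n)%N then y (n - k)%N else 0).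
Proof.
move=> y_low; rewrite (big_cat_nat (n := n)) //= 1?addrC; last lia.
congr (_ + _).
  rewrite -{1}(add0n n) big_addn (_ : ((n + b).+1 - n = b.+1)%N); last lia.
  by apply: eq_bigr => k _; rewrite addnC.
pose F i := if (i < n)%N then y (n - i.+1)%N else 0.
rewrite big_nat_rev /= big_add1 /= (eq_big_nat _ _ (F2 := F)) => [|i /andP[_ ltin]].
  rewrite (@big_nat_support_eq _ F n b) => [|i|i]; rewrite /F.
  - by apply: eq_bigr => i _; case: ifP.
  - by rewrite ltnNge => ->.
  - by case: ifP => // ltin lebi; apply: y_low; lia.
by rewrite /F ltin add0n.
Qed.

Section OrthDecomposition.
Context {R : realType} {V : completeNormedModType R[i]} (ip : inner_product V)
  (H : nat -> set V) (HD : orth_decomp ip H).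

Lemma level_subspace n : Defs.subspace (H n).
Proof. by case: HD. Qed.

Lemma level_orth n m x y : n <> m -> H n x -> H m y -> ip x y = 0.
Proof. by case: HD => _ _ + _; apply. Qed.

Lemma ip_sum_level (x : nat -> V) N j : (forall m, H m (x m)) -> (j < N)%N ->
  ip (\sum_(0 <= m < N) x m) (x j) = ip (x j) (x j).
Proof.
move=> Hx ltjN; rewrite ip_suml (bigD1_seq j) ?mem_index_iota ?iota_uniq //=.
rewrite big_seq_cond big1 ?addr0 // => m /andP[_ /eqP neq_mj].
exact: level_orth neq_mj (Hx m) (Hx j).
Qed.

Definition fin_sums : set V := [set v | exists N, finsum_sub H 0 N v].

Lemma fin_sums_dense : closure fin_sums = setT.
Proof. by case: HD. Qed.

Definition decomposes (d : V) (x : nat -> V) (N : nat) :=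
  [/\ forall m, H m (x m), forall m, (N <= m)%N -> x m = 0 &
      d = \sum_(0 <= m < N) x m].

Lemma decomposes_sum d x N M : decomposes d x N -> (N <= M)%N ->
  d = \sum_(0 <= m < M) x m.
Proof.
case=> _ xN -> leNM; apply: big_nat_support_eq => // j leMj.
exact/xN/(leq_trans leNM).
Qed.

Lemma decomposes_widen d x N M : decomposes d x N -> (N <= M)%N -> decomposes d x M.
Proof.
move=> dx leNM; have [Hx xN _] := dx; split => //; last exact: decomposes_sum dx leNM.
by move=> m leMm; apply/xN/(leq_trans leNM).
Qed.

Lemma decomposes_fin_sums d x N : decomposes d x N -> fin_sums d.
Proof. by case=> Hx _ ->; exists N, x. Qed.

Lemma fin_sums_decomposes d : fin_sums d -> exists p : (nat -> V) * nat, decomposes d p.1 p.2.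
Proof.
move=> [N [x [Hx ->]]]; exists (fun m => if (m < N)%N then x m else 0, N); split => /=.
- move=> m; case: ifP => [ltmN|_]; first by apply: Hx; rewrite ltmN.
  exact: subspace0 (level_subspace m).
- by move=> m leNm; rewrite ltnNge leNm.
- by apply: eq_big_nat => m /andP[_ ->].
Qed.

Lemma decomposes_unique d x N y M : decomposes d x N -> decomposes d y M -> x =1 y.
Proof.
move=> dx dy j; set K := maxn (maxn N M) j.+1.
have [Hx _ _] := dx; have [Hy _ _] := dy.
pose z m := x m - y m; have Hz m : H m (z m) by apply: subspaceB; [exact: level_subspace | |].
have sum0 : \sum_(0 <= m < K) z m = 0.
  rewrite sumrB -(decomposes_sum dx) -?(decomposes_sum dy) ?subrr //; lia.
have ltjK : (j < K)%N by rewrite /K; lia.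
apply/subr0_eq/(ip_self_eq0 (ip := ip)).
by rewrite -/(z j) -(ip_sum_level Hz ltjK) sum0 ip0l.
Qed.

(* Outside [fin_sums] the components are junk (all zero). *)
Definition components (d : V) : (nat -> V) * nat :=
  if pselect (exists p : (nat -> V) * nat, decomposes d p.1 p.2) is left h
  then sval (cid h) else (fun=> 0, 0%N).
Definition comp d := (components d).1.
Definition comp_bound d := (components d).2.

Lemma decomposes_comp d : fin_sums d -> decomposes d (comp d) (comp_bound d).
Proof.
move=> /fin_sums_decomposes ex; rewrite /comp /comp_bound /components.
by case: pselect => [h|//]; case: cid.
Qed.

Lemma comp_eq d x N : decomposes d x N -> comp d =1 x.
Proof.
by move=> dx; apply: decomposes_unique (decomposes_comp (decomposes_fin_sums dx)) dx.
Qed.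

Lemma comp_level d m : fin_sums d -> H m (comp d m).
Proof. by case/decomposes_comp. Qed.

Lemma decomposesZD a d e x N y M : decomposes d x N -> decomposes e y M ->
  decomposes (a *: d + e) (fun m => a *: x m + y m) (maxn N M).
Proof.
move=> dx ey; have [Hx xN _] := dx; have [Hy yM _] := ey; split.
- by move=> m; apply: subspaceZD; [exact: level_subspace | |].
- by move=> m; rewrite geq_max => /andP[/xN -> /yM ->]; rewrite scaler0 addr0.
- rewrite (decomposes_sum dx (leq_maxl N M)) (decomposes_sum ey (leq_maxr N M)).
  by rewrite scaler_sumr -big_split.
Qed.

Lemma fin_sums_subspace : Defs.subspace fin_sums.
Proof.
split; first by exists 0%N, (fun=> 0); split => //; rewrite big_geq.
move=> a d e /decomposes_comp dd /decomposes_comp de.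
exact: decomposes_fin_sums (decomposesZD a dd de).
Qed.

Lemma compZD a d e m : fin_sums d -> fin_sums e ->
  comp (a *: d + e) m = a *: comp d m + comp e m.
Proof.
by move=> /decomposes_comp dd /decomposes_comp de; rewrite (comp_eq (decomposesZD a dd de)).
Qed.

Lemma comp0 m : comp 0 m = 0.
Proof.
rewrite (@comp_eq 0 (fun=> 0) 0) //; split => // [m'|]; last by rewrite big_geq.
exact: subspace0 (level_subspace m').
Qed.

Lemma decomposes_level n x : H n x ->
  decomposes x (fun m => if m == n then x else 0) n.+1.
Proof.
move=> Hnx; split.
- by move=> m; case: eqP => [->|_] //; exact: subspace0 (level_subspace m).
- by move=> m ltnm; case: eqP => // eqmn; rewrite eqmn ltnn in ltnm.
- rewrite big_nat_recr //= eqxx big1_seq ?add0r // => m /andP[_].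
  by rewrite mem_index_iota => /andP[_ ltmn]; case: eqP => // eqmn; rewrite eqmn ltnn in ltmn.
Qed.

Lemma fin_sums_level n x : H n x -> fin_sums x.
Proof. by move/decomposes_level/decomposes_fin_sums. Qed.

Lemma rnorm_comp_le d j : fin_sums d -> rnorm (comp d j) <= rnorm d.
Proof.
move=> /decomposes_comp [Hd dN dE].
case: (ltnP j (comp_bound d)) => [ltjN|/dN ->]; last by rewrite rnorm0 rnorm_ge0.
by apply: (rnorm_le_of_ip (ip := ip)); rewrite [X in ip X _]dE ip_sum_level.
Qed.

Section Levelwise.
Variables (G : V -> nat -> V) (G0 : forall m, G 0 m = 0).

Definition levelwise d := \sum_(0 <= m < comp_bound d) G (comp d m) m.

Lemma levelwise_decomposes d x N : decomposes d x N ->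
  levelwise d = \sum_(0 <= m < N) G (x m) m.
Proof.
move=> dx; have xE := comp_eq dx; have [_ dN _] := decomposes_comp (decomposes_fin_sums dx).
have [_ xN _] := dx; rewrite /levelwise (eq_bigr (fun m => G (x m) m)) => [|m _].
  apply: big_nat_support_eq => j.
    by move/dN; rewrite -xE => ->.
  by move/xN ->.
by rewrite xE.
Qed.

Lemma levelwise_level n x : H n x -> levelwise x = G x n.
Proof.
move=> /decomposes_level /levelwise_decomposes ->; rewrite big_nat_recr //= eqxx.
rewrite big1_seq ?add0r // => m /andP[_]; rewrite mem_index_iota => /andP[_ ltmn].
by case: eqP => [eqmn|_]; [rewrite eqmn ltnn in ltmn | exact: G0].
Qed.

Lemma levelwiseZD a d e :
  (forall m a u w, H m u -> H m w -> G (a *: u + w) m = a *: G u m + G w m) ->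
  fin_sums d -> fin_sums e -> levelwise (a *: d + e) = a *: levelwise d + levelwise e.
Proof.
move=> G_lin /decomposes_comp dd /decomposes_comp de.
rewrite (levelwise_decomposes (decomposesZD a dd de)).
rewrite (levelwise_decomposes (decomposes_widen dd (leq_maxl _ (comp_bound e)))).
rewrite (levelwise_decomposes (decomposes_widen de (leq_maxr (comp_bound d) _))).
rewrite scaler_sumr -big_split; apply: eq_bigr => m _.
by apply: G_lin; [case: dd | case: de].
Qed.

(* Pythagoras on both sides: the levels of [d] and of [levelwise d] are orthogonal families. *)
Lemma levelwise_bound (C : R) d : 0 <= C ->
  (forall m u, H m u -> rnorm (G u m) <= C * rnorm u) ->
  (forall m m' u u', m <> m' -> H m u -> H m' u' -> ip (G u m) (G u' m') = 0) ->
  fin_sums d -> rnorm (levelwise d) <= C * rnorm d.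
Proof.
move=> C0 G_bound G_orth /decomposes_comp dd; have [Hd _ dE] := dd.
have eG : rnorm (levelwise d) ^+ 2 =
    \sum_(0 <= m < comp_bound d) rnorm (G (comp d m) m) ^+ 2.
  by apply: (pythagoras_sum (ip := ip)) => i j _ _ neq_ij; apply: G_orth.
have ed : rnorm d ^+ 2 = \sum_(0 <= m < comp_bound d) rnorm (comp d m) ^+ 2.
  by rewrite {1}dE; apply: (pythagoras_sum (ip := ip)) => i j _ _ neq_ij; exact: level_orth neq_ij (Hd i) (Hd j).
have : rnorm (levelwise d) ^+ 2 <= (C * rnorm d) ^+ 2.
  rewrite eG exprMn ed mulr_sumr; apply: ler_sum => m _; rewrite -exprMn.
  have := G_bound m _ (Hd m); have := rnorm_ge0 (G (comp d m) m); nra.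
have := mulr_ge0 C0 (rnorm_ge0 d); have := rnorm_ge0 (levelwise d); nra.
Qed.

End Levelwise.
End OrthDecomposition.

Section BandLimited.
Context {R : realType} {V : completeNormedModType R[i]} (ip : inner_product V)
  (H : nat -> set V) (HD : orth_decomp ip H)
  (T : {linear V -> V}) (b : nat) (Tb : band_limited H b T).

Lemma decomposes_band n x : H n x ->
  exists2 y, decomposes H (T x) y (n + b).+1 & forall m, (m + b < n)%N -> y m = 0.
Proof.
move=> /Tb [y [Hy ->]].
exists (fun m => if (n - b <= m < (n + b).+1)%N then y m else 0); last first.
  by move=> m ltmbn; case: ifP => // /andP[]; lia.
split.
- move=> m; case: ifP => [/Hy|_] //; exact: subspace0 (level_subspace HD m).
- by move=> m lenm; rewrite ltnNge lenm andbF.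
rewrite [RHS](big_cat_nat (n := n - b)) //= ?leq_subLR; last lia.
rewrite [X in _ = X + _]big1_seq ?add0r => [|m]; last first.
  by rewrite mem_index_iota => /andP[_ ltm]; case: ifP => // /andP[]; lia.
by apply: eq_big_nat => m ->.
Qed.

Lemma fin_sums_band n x : H n x -> fin_sums H (T x).
Proof. by case/decomposes_band => y /decomposes_fin_sums. Qed.

(* An index map [t] sends a source level [m] to the level [t m] that a piece of [T] maps it
   to ([None]: the piece vanishes on [H m]); [raise_index k] and [lower_index k] encode the
   [k]-raising and the [k]-lowering piece. *)
Definition shift_part (t : nat -> option nat) (y : V) (m : nat) : V :=
  if t m is Some j then comp H (T y) j else 0.

Definition raise_index (k m : nat) : option nat := Some (m + k)%N.

Definition lower_index (k m : nat) : option nat :=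
  if (k <= m)%N then Some (m - k)%N else None.

Lemma raise_index_inj k m m' j :
  raise_index k m = Some j -> raise_index k m' = Some j -> m = m'.
Proof. by move=> [<-] [] /eqP; rewrite eqn_add2r => /eqP. Qed.

Lemma lower_index_inj k m m' j :
  lower_index k m = Some j -> lower_index k m' = Some j -> m = m'.
Proof. by rewrite /lower_index; do 2!case: ifP => // ?; move=> [<-] [] /eqP; lia. Qed.

Lemma band_split n x : H n x ->
  T x = \sum_(0 <= k < b.+1) shift_part (raise_index k) x n +
        \sum_(1 <= k < b.+1) shift_part (lower_index k) x n.
Proof.
move=> /decomposes_band [y Ty y_low].
rewrite {1}(decomposes_sum Ty (leqnn _)) (big_nat_window y_low).
congr (_ + _); apply: eq_bigr => k _; rewrite /shift_part /raise_index /lower_index.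
  by rewrite (comp_eq HD Ty) addnC.
by case: ifP; rewrite ?(comp_eq HD Ty).
Qed.

Lemma shift_part0 t m : shift_part t 0 m = 0.
Proof. by rewrite /shift_part linear0; case: (t m) => // j; rewrite (comp0 HD). Qed.

Lemma shift_partZD t m a u w : H m u -> H m w ->
  shift_part t (a *: u + w) m = a *: shift_part t u m + shift_part t w m.
Proof.
rewrite /shift_part => Hu Hw; case: (t m) => [j|]; last by rewrite scaler0 addr0.
by rewrite linearP (compZD HD a j (fin_sums_band Hu) (fin_sums_band Hw)).
Qed.

Lemma shift_part_level t m j u : H m u -> t m = Some j -> H j (shift_part t u m).
Proof. by rewrite /shift_part => Hu ->; apply/(comp_level HD)/fin_sums_band/Hu. Qed.

Section Bounded.
Variables (C : R) (C0 : 0 <= C) (T_bound : forall x, rnorm (T x) <= C * rnorm x).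
Variable t : nat -> option nat.
Hypothesis t_inj : forall m m' j, t m = Some j -> t m' = Some j -> m = m'.

Lemma shift_part_bound m u : H m u -> rnorm (shift_part t u m) <= C * rnorm u.
Proof.
rewrite /shift_part => Hu; case: (t m) => [j|]; last by rewrite rnorm0 mulr_ge0 ?rnorm_ge0.
exact: le_trans (rnorm_comp_le HD _ (fin_sums_band Hu)) (T_bound u).
Qed.

Lemma shift_part_orth m m' u u' : m <> m' -> H m u -> H m' u' ->
  ip (shift_part t u m) (shift_part t u' m') = 0.
Proof.
move=> neq_mm' Hu Hu'; case tm: (t m) => [j|]; last by rewrite /shift_part tm ip0l.
case tm': (t m') => [j'|]; last by rewrite /shift_part tm' ip0r.
apply: (level_orth HD _ (shift_part_level Hu tm) (shift_part_level Hu' tm')).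
by move=> eq_jj'; apply: neq_mm'; apply: t_inj tm _; rewrite tm' eq_jj'.
Qed.

End Bounded.

Definition shift_op t := levelwise H (shift_part t).

Lemma shift_opZD t a d e : fin_sums H d -> fin_sums H e ->
  shift_op t (a *: d + e) = a *: shift_op t d + shift_op t e.
Proof. exact/(levelwiseZD HD)/shift_partZD/shift_part0. Qed.

Lemma shift_op_bound (C : R) t : 0 <= C -> (forall x, rnorm (T x) <= C * rnorm x) ->
  (forall m m' j, t m = Some j -> t m' = Some j -> m = m') ->
  forall d, fin_sums H d -> rnorm (shift_op t d) <= C * rnorm d.
Proof.
move=> C0 T_bound t_inj d Dd; apply: (levelwise_bound HD C0 _ _ Dd).
- exact: shift_part_bound.
- exact: shift_part_orth.
Qed.

Lemma shift_op_level t n x : H n x -> shift_op t x = shift_part t x n.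
Proof. exact/(levelwise_level HD)/shift_part0. Qed.

Lemma band_split_fin_sums d : fin_sums H d ->
  T d = \sum_(0 <= k < b.+1) shift_op (raise_index k) d +
        \sum_(1 <= k < b.+1) shift_op (lower_index k) d.
Proof.
move=> /(decomposes_comp HD) [Hd _ dE].
rewrite {1}dE linear_sum (eq_bigr _ (fun m _ => band_split (Hd m))) big_split /=.
by congr (_ + _); rewrite exchange_big.
Qed.

End BandLimited.

Section BandDecomposition.
Context {R : realType} {V : completeNormedModType R[i]} (ip : inner_product V)
  (H : nat -> set V) (HD : orth_decomp ip H).

(* The pieces [P k] and [Q k] of [S] lie in pairwise distinct levels [n + k] and [n - k]. *)
Lemma ip_band_pieces b n (P Q : nat -> V) (S : V) :
  (forall k, (k <= b)%N -> H (n + k)%N (P k)) ->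
  (forall k, (1 <= k <= b)%N ->
     ((k <= n)%N -> H (n - k)%N (Q k)) /\ ((n < k)%N -> Q k = 0)) ->
  S = \sum_(0 <= k < b.+1) P k + \sum_(1 <= k < b.+1) Q k ->
  (forall j, (j <= b)%N -> ip S (P j) = ip (P j) (P j)) /\
  (forall j, (1 <= j <= b)%N -> ip S (Q j) = ip (Q j) (Q j)).
Proof.
move=> HP HQ ->; split => j lejb.
  rewrite ipDl (ip_sum_seq_eq0 (r := index_iota 1 b.+1)) ?addr0 => [|k].
    apply: ip_sum_seq_single; [exact: iota_uniq | by rewrite mem_index_iota; lia |].
    move=> k; rewrite mem_index_iota => lekb /eqP neq_kj.
    by apply: (level_orth HD _ (HP k _) (HP j _)) => //; lia.
  rewrite mem_index_iota => kb; have [HQk Qk0] := HQ k kb.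
  case: (leqP k n) => [lekn|/Qk0 ->]; last by rewrite ip0l.
  by apply: (level_orth HD _ (HQk lekn) (HP j _)) => //; lia.
have [HQj Qj0] := HQ j lejb.
case: (leqP j n) => [lejn|/Qj0 ->]; last by rewrite !ip0r.
rewrite ipDl (ip_sum_seq_eq0 (r := index_iota 0 b.+1)) ?add0r => [|k].
  apply: ip_sum_seq_single; [exact: iota_uniq | by rewrite mem_index_iota; lia |].
  move=> k; rewrite mem_index_iota => kb /eqP neq_kj; have [HQk Qk0] := HQ k kb.
  case: (leqP k n) => [lekn|/Qk0 ->]; last by rewrite ip0l.
  by apply: (level_orth HD _ (HQk lekn) (HQj lejn)); lia.
rewrite mem_index_iota => lekb.
by apply: (level_orth HD _ (HP k _) (HQj lejn)) => //; lia.
Qed.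

Lemma bounded_eq_on_levels (L1 L2 : {linear V -> V}) :
  bounded_op L1 -> bounded_op L2 -> (forall n x, H n x -> L1 x = L2 x) -> L1 =1 L2.
Proof.
move=> L1b L2b L12; apply: (bounded_eq_on_dense (fin_sums_dense HD) L1b L2b).
move=> d /(decomposes_comp HD) [Hd _ ->]; rewrite !linear_sum.
by apply: eq_bigr => m _; apply: L12 (Hd m).
Qed.

Lemma band_decomposition_unique b T (X Y X' Y' : nat -> {linear V -> V}) :
  band_decomposition H b T X Y -> band_decomposition H b T X' Y' ->
  (forall k, (k <= b)%N -> X k =1 X' k) /\ (forall k, (1 <= k <= b)%N -> Y k =1 Y' k).
Proof.
move=> [HX HY TE] [HX' HY' TE'].
have on_levels n x : H n x ->
    (forall k, (k <= b)%N -> X k x = X' k x) /\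
    (forall k, (1 <= k <= b)%N -> Y k x = Y' k x).
  move=> Hx; have Hsub := level_subspace HD.
  have HP k : (k <= b)%N -> H (n + k)%N (X k x - X' k x).
    by move=> lekb; apply: subspaceB; [exact: Hsub | exact: (HX k lekb).2 | exact: (HX' k lekb).2].
  have HQ k : (1 <= k <= b)%N -> ((k <= n)%N -> H (n - k)%N (Y k x - Y' k x)) /\
      ((n < k)%N -> Y k x - Y' k x = 0).
    move=> kb; have [_ /(_ n x Hx) [Yx Yx0]] := HY k kb.
    have [_ /(_ n x Hx) [Y'x Y'x0]] := HY' k kb.
    split=> [lekn|ltnk]; last by rewrite Yx0 ?Y'x0 ?subrr.
    by apply: subspaceB; [exact: Hsub | exact: Yx | exact: Y'x].
  have : 0 = \sum_(0 <= k < b.+1) (X k x - X' k x) + \sum_(1 <= k < b.+1) (Y k x - Y' k x).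
    by rewrite !sumrB addrACA -opprD -TE -TE' subrr.
  move=> /(ip_band_pieces HP HQ) [eqX eqY].
  by split=> k kb; apply/subr0_eq/(ip_self_eq0 (ip := ip)); rewrite -?eqX -?eqY ?ip0l.
split=> k kb; apply: bounded_eq_on_levels.
- exact: (HX k kb).1.
- exact: (HX' k kb).1.
- by move=> n x /on_levels [+ _]; apply.
- exact: (HY k kb).1.
- exact: (HY' k kb).1.
- by move=> n x /on_levels [_]; apply.
Qed.

Lemma restr_norm_ge0 (S : {linear V -> V}) n : (0 <= restr_norm S (H n))%E.
Proof.
apply: (@le_trans _ _ (complex.Re `|S 0|)%:E); first by rewrite linear0 normr0.
apply: ereal_sup_ubound; exists 0 => //; split; last by rewrite normr0 ler01.
exact: subspace0 (level_subspace HD n).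
Qed.

Lemma summable_op_le (S S' : {linear V -> V}) :
  (forall n x, H n x -> rnorm (S x) <= rnorm (S' x)) ->
  summable_op H S' -> summable_op H S.
Proof.
move=> SS'; apply: le_lt_trans; apply: lee_nneseries => [n _ _|n _].
  exact: restr_norm_ge0.
apply: ge_ereal_sup => _ [x [Hx x1] <-].
apply: (@le_trans _ _ (complex.Re `|S' x|)%:E); first by rewrite lee_fin; apply: SS' Hx.
by apply: ereal_sup_ubound; exists x.
Qed.

Lemma band_decomposition_summable b T (X Y : nat -> {linear V -> V}) :
  band_decomposition H b T X Y -> summable_op H T ->
  (forall k, (k <= b)%N -> summable_op H (X k)) /\
  (forall k, (1 <= k <= b)%N -> summable_op H (Y k)).
Proof.
move=> [HX HY TE] Tsum.
have pieces n x : H n x ->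
    (forall j, (j <= b)%N -> ip (T x) (X j x) = ip (X j x) (X j x)) /\
    (forall j, (1 <= j <= b)%N -> ip (T x) (Y j x) = ip (Y j x) (Y j x)).
  move=> Hx; apply: ip_band_pieces (TE x) => [k kb|k kb].
    exact: (HX k kb).2 n x Hx.
  by have [_ /(_ n x Hx)] := HY k kb.
split=> k kb; apply: summable_op_le Tsum => n x Hx; apply: (rnorm_le_of_ip (ip := ip)).
  by have [+ _] := pieces n x Hx; apply.
by have [_] := pieces n x Hx; apply.
Qed.

Lemma band_decomposition_exists b T : bounded_op T -> band_limited H b T ->
  exists X Y : nat -> {linear V -> V}, band_decomposition H b T X Y.
Proof.
move=> /bounded_opP [C /ltW C0 T_bound] Tb.
have Dsub := fin_sums_subspace HD; have Ddense := fin_sums_dense HD.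
pose ext t t_inj := extension Dsub Ddense (shift_opZD HD Tb t) C0
  (shift_op_bound HD Tb C0 T_bound t_inj).
have ext_level t t_inj n x : H n x -> ext t t_inj x = shift_part H T t x n.
  move=> Hx; rewrite extensionE; first exact: (shift_op_level HD T t Hx).
  exact: (fin_sums_level HD Hx).
exists (fun k => ext _ (@raise_index_inj k)), (fun k => ext _ (@lower_index_inj k)); split.
- move=> k _; split=> [|n x Hx]; first exact: extension_bounded.
  by rewrite (ext_level _ _ _ _ Hx); apply: (shift_part_level HD Tb Hx).
- move=> k _; split=> [|n x Hx]; first exact: extension_bounded.
  rewrite (ext_level _ _ _ _ Hx) /shift_part /lower_index.
  split=> [lekn|ltnk]; last by rewrite leqNgt ltnk.
  by rewrite lekn; apply/(comp_level HD)/(fin_sums_band HD Tb Hx).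
- move=> v.
  have ext_cvg t t_inj :
      converges_to (fun j => ext t t_inj (approx Ddense v j)) (ext t t_inj v).
    exact: converges_to_bounded C0 (extension_bound _ _ _ _ _) (converges_to_approx Ddense v).
  apply: (converges_to_unique (converges_to_bounded C0 T_bound (converges_to_approx Ddense v))).
  apply: eq_converges_to (converges_toD
    (converges_to_sum _ (fun k => ext_cvg _ (@raise_index_inj k)))
    (converges_to_sum _ (fun k => ext_cvg _ (@lower_index_inj k)))) => j.
  rewrite (band_split_fin_sums HD Tb (approx_in Ddense v j)).
  by congr (_ + _); apply: eq_bigr => k _; rewrite extensionE //; apply: approx_in.
Qed.

End BandDecomposition.

Local Close Scope complex_scope.

Theorem proposition2p5 (R : realType) (V : completeNormedModType R[i])
    (ip : inner_product V) (H : nat -> set V) (HD : orth_decomp ip H)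
    (T : {linear V -> V}) (Tbd : bounded_op T) (b : nat)
    (Tb : band_limited H b T) :
  (exists X Y : nat -> {linear V -> V}, band_decomposition H b T X Y) /\
  (forall X Y X' Y' : nat -> {linear V -> V},
     band_decomposition H b T X Y -> band_decomposition H b T X' Y' ->
     (forall k, (k <= b)%N -> X k =1 X' k) /\
     (forall k, (1 <= k <= b)%N -> Y k =1 Y' k)) /\
  (summable_op H T ->
   forall X Y : nat -> {linear V -> V}, band_decomposition H b T X Y ->
     (forall k, (k <= b)%N -> summable_op H (X k)) /\
     (forall k, (1 <= k <= b)%N -> summable_op H (Y k))).
Proof.
split; first exact: (band_decomposition_exists HD Tbd Tb).
split; first exact: (band_decomposition_unique HD).
by move=> Tsum X Y /(band_decomposition_summable HD); apply.
Qed.
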